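(* Let $\mathbb{k}$ be a field of characteristic $0$, $\mathfrak{M}$ a monomial group, and $(\epsilon_i)_{i\in I}$ a family in $\mathbb{k}[[\mathfrak{M}]]^{\prec1}$. Then $(\epsilon_i)$ is summable if and only if $(\log(1+\epsilon_i))_{i\in I}$ is summable.
   Context: A monomial group is a (multiplicatively written) totally ordered abelian group $\mathfrak{M}$, with order written $\prec$. A subset of $\mathfrak{M}$ is well-based if it has no infinite strictly increasing sequence. $\mathbb{k}[[\mathfrak{M}]]$ is the Hahn field of formal series $f=\sum_{\mathfrak{m}}f_{\mathfrak{m}}\mathfrak{m}$ ($f_{\mathfrak{m}}\in\mathbb{k}$) with well-based support $\operatorname{supp}f=\{\mathfrak{m}:f_{\mathfrak{m}}\neq0\}$. $\mathbb{k}[[\mathfrak{M}]]^{\prec1}$ is the set of $f$ with $\operatorname{supp} f\subseteq\{\mathfrak{m}:\mathfrak{m}\prec1\}$. A family $(f_i)_{i\in I}$ ($I$ a set) is summable if $\bigcup_i\operatorname{supp}f_i$ is well-based and each $\mathfrak{m}$ lies in $\operatorname{supp}f_i$ for only finitely many $i$; its sum is taken coefficientwise. For $\epsilon\in\mathbb{k}[[\mathfrak{M}]]^{\prec1}$, $\log(1+\epsilon)=\sum_{j\ge1}(-1)^{j-1}\epsilon^j/j$ (this sum exists). *)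

From HB Require Import structures.
From mathcomp Require Import all_boot all_order all_algebra.
From mathcomp Require Import boolp classical_sets cardinality fsbigop.
Set Implicit Arguments.
Unset Strict Implicit.
Unset Printing Implicit Defensive.
Import Order.TTheory GRing.Theory.
Local Open Scope classical_set_scope.
Local Open Scope ring_scope.

(* The carrier is a
   choiceType (harmless classically) so that finitely supported sums make sense. *)
Record monomial_group := MonomialGroup {
  mg_carrier :> choiceType;
  mg_mul : mg_carrier -> mg_carrier -> mg_carrier;
  mg_one : mg_carrier;
  mg_inv : mg_carrier -> mg_carrier;
  mg_lt : mg_carrier -> mg_carrier -> Prop;
  mg_mulA : associative mg_mul;
  mg_mulC : commutative mg_mul;
  mg_mul1 : left_id mg_one mg_mul;
  mg_mulV : left_inverse mg_one mg_inv mg_mul;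
  mg_lt_irr : forall x, ~ mg_lt x x;
  mg_lt_trans : forall x y z, mg_lt x y -> mg_lt y z -> mg_lt x z;
  mg_lt_total : forall x y, x <> y -> mg_lt x y \/ mg_lt y x;
  mg_lt_mul : forall x y z, mg_lt x y -> mg_lt (mg_mul x z) (mg_mul y z)
}.

Section Hahn.
Variables (k : fieldType) (M : monomial_group).

Definition well_based (S : set M) : Prop :=
  forall u : nat -> M, (forall n, S (u n)) -> ~ (forall n, mg_lt (u n) (u n.+1)).

(* formal series are represented by their coefficient functions M -> k *)
Definition supp (f : M -> k) : set M := [set m | f m != 0].

Definition is_hahn (f : M -> k) : Prop := well_based (supp f).

Definition is_infinitesimal (f : M -> k) : Prop :=
  is_hahn f /\ forall m, f m != 0 -> mg_lt m (mg_one M).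

Definition summable (I : Type) (f : I -> M -> k) : Prop :=
  well_based (\bigcup_(i in [set: I]) supp (f i)) /\
  forall m : M, finite_set [set i | f i m != 0].

(* coefficientwise sum of a family (meaningful when the family is summable) *)
Definition hsum (I : choiceType) (f : I -> M -> k) : M -> k :=
  fun m => \sum_(i \in [set: I]) f i m.

(* Hahn product (the sum is finite for well-based supports) *)
Definition hmul (f g : M -> k) : M -> k :=
  fun m => \sum_(p \in [set p : M * M | mg_mul p.1 p.2 = m]) f p.1 * g p.2.

Definition hone : M -> k := fun m => if m == mg_one M then 1 else 0.

Fixpoint hexp (f : M -> k) (j : nat) : M -> k :=
  if j is j'.+1 then hmul f (hexp f j') else hone.

(* log(1+eps) = sum_{j>=1} (-1)^(j-1) eps^j / j *)
Definition hlog1p (eps : M -> k) : M -> k :=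
  hsum (fun j : nat => fun m =>
    if j is 0%N then 0 else (-1) ^+ j.-1 * (j%:R)^-1 * hexp eps j m).

End Hahn.

(* Neumann's lemma: if S is well-based and S < 1, then the semigroup S+ of
   nonempty products of elements of S is well-based, and every monomial is such
   a product in only finitely many ways.  Both follow from the nonexistence of a
   "bad" sequence of words over S (pairwise distinct, with nondecreasing
   products), proved by Nash-Williams' minimal bad sequence argument.
   Every monomial of log(1 + e) is a product of monomials of e, so by Neumann's
   lemma summability passes from (e_i) to (log(1 + e_i)).  Conversely, by
   well-based induction every monomial m of e is a product of monomials of
   log(1 + e): either m occurs in some e^j with j > 1, and is then a product of
   strictly larger monomials of e, or the coefficients of m in e and in
   log(1 + e) agree. *)

From mathcomp Require Import all_boot all_order all_algebra.
From mathcomp Require Import boolp classical_sets functions cardinality fsbigop.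
Set Implicit Arguments.
Unset Strict Implicit.
Unset Printing Implicit Defensive.
Import GRing.Theory.
Local Open Scope classical_set_scope.

Section MonomialOrder.
Variable M : monomial_group.
Implicit Types (x y z s t : M) (l : seq M).

Definition mg_le x y := mg_lt x y \/ x = y.

Definition mg_prod l : M := foldr (@mg_mul M) (mg_one M) l.

Lemma mg_lt_asym x y : mg_lt x y -> ~ mg_lt y x.
Proof. by move=> xy yx; apply: (@mg_lt_irr M x); apply: mg_lt_trans xy yx. Qed.

Lemma mg_le_lt_trans x y z : mg_le x y -> mg_lt y z -> mg_lt x z.
Proof. by case=> [xy|->] // yz; apply: mg_lt_trans xy yz. Qed.

Lemma mg_lt_le_trans x y z : mg_lt x y -> mg_le y z -> mg_lt x z.
Proof. by move=> xy [yz|<-] //; apply: mg_lt_trans xy yz. Qed.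

Lemma mg_le_of_nlt x y : ~ mg_lt x y -> mg_le y x.
Proof.
move=> nxy; have [->|/mg_lt_total[] //] := pselect (x = y); first by right.
by left.
Qed.

Lemma mg_le_anti x y : mg_le x y -> mg_le y x -> x = y.
Proof. by case=> // xy [/(mg_lt_asym xy)|]. Qed.

Lemma mg_mul1m x : mg_mul (mg_one M) x = x.
Proof. exact: mg_mul1. Qed.

Lemma mg_mulm1 x : mg_mul x (mg_one M) = x.
Proof. by rewrite mg_mulC mg_mul1m. Qed.

Lemma mg_lt_mul2l x y z : mg_lt x y -> mg_lt (mg_mul z x) (mg_mul z y).
Proof. by rewrite ![mg_mul z _]mg_mulC; apply: mg_lt_mul. Qed.

Lemma mg_le_mul2r x y z : mg_le x y -> mg_le (mg_mul x z) (mg_mul y z).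
Proof. by case=> [xy|->]; [left; apply: mg_lt_mul|right]. Qed.

Lemma mg_lt1_mul s x : mg_lt s (mg_one M) -> mg_lt (mg_mul s x) x.
Proof. by move=> /(mg_lt_mul x); rewrite mg_mul1m. Qed.

Lemma mg_le_mul2r_cancel x y z : mg_le (mg_mul x z) (mg_mul y z) -> mg_le x y.
Proof.
move=> le_xy; apply: mg_le_of_nlt => /(mg_lt_mul z) yx.
case: le_xy => [/(mg_lt_asym yx)//|eq_xy].
by rewrite eq_xy in yx; apply: (mg_lt_irr yx).
Qed.

Lemma mg_le_mul_cancel s t x y :
  mg_le t s -> mg_le (mg_mul s x) (mg_mul t y) -> mg_le x y.
Proof.
move=> ts sxty; apply: mg_le_of_nlt => yx.
apply: (@mg_lt_irr M (mg_mul s x)); apply: mg_le_lt_trans sxty _.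
exact: mg_lt_le_trans (mg_lt_mul2l t yx) (mg_le_mul2r x ts).
Qed.

Lemma mg_prod_cat l1 l2 : mg_prod (l1 ++ l2) = mg_mul (mg_prod l1) (mg_prod l2).
Proof. by elim: l1 => [|x l IH] /=; rewrite ?mg_mul1m // IH mg_mulA. Qed.

Lemma mg_prod_rem y l : y \in l -> mg_prod l = mg_mul y (mg_prod (rem y l)).
Proof.
elim: l => // x l IH; rewrite inE /=; have [->//|neq_xy /= yl] := eqVneq x y.
by rewrite IH // !mg_mulA (mg_mulC x).
Qed.

Lemma mg_prod_le1 l : (forall x, x \in l -> mg_lt x (mg_one M)) ->
  mg_le (mg_prod l) (mg_one M).
Proof.
elim: l => [|x l IH] lt1 /=; first by right.
left; apply: mg_lt_le_trans (mg_lt1_mul _ (lt1 x (mem_head _ _))) _.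
by apply: IH => y yl; apply: lt1; rewrite inE yl orbT.
Qed.

Lemma mg_prod_lt1 l : (forall x, x \in l -> mg_lt x (mg_one M)) -> l != [::] ->
  mg_lt (mg_prod l) (mg_one M).
Proof.
case: l => // x l lt1 _ /=.
apply: mg_lt_le_trans (mg_lt1_mul _ (lt1 x (mem_head _ _))) (mg_prod_le1 _).
by move=> y yl; apply: lt1; rewrite inE yl orbT.
Qed.

Lemma mg_prod_lt_mem l y : (forall x, x \in l -> mg_lt x (mg_one M)) ->
  y \in l -> (1 < size l)%N -> mg_lt (mg_prod l) y.
Proof.
move=> lt1 yl size_l; rewrite (mg_prod_rem yl) -[X in mg_lt _ X]mg_mulm1.
apply: mg_lt_mul2l; apply: mg_prod_lt1; first by move=> x /mem_rem; apply: lt1.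
by rewrite -size_eq0 size_rem //; case: (size l) size_l => [|[]].
Qed.

End MonomialOrder.

Section WellBased.
Variable M : monomial_group.

Lemma well_based_sub (A B : set M) : A `<=` B -> well_based B -> well_based A.
Proof. by move=> AB wB u uA; apply: wB => n; apply/AB/uA. Qed.

Lemma well_based_ind (A : set M) (P : M -> Prop) : well_based A ->
  (forall x, A x -> (forall y, A y -> mg_lt x y -> P y) -> P x) ->
  forall x, A x -> P x.
Proof.
move=> wA IH x0 Ax0; apply: contrapT => nPx0.
have /choice[up upP] : forall x, exists y,
    A x /\ ~ P x -> [/\ A y, ~ P y & mg_lt x y].
  move=> x; have [[Ax nPx]|] := pselect (A x /\ ~ P x); last by exists x.
  have /existsNP[y /not_implyP[Ay /not_implyP[xy nPy]]] :
    ~ (forall y, A y -> mg_lt x y -> P y) by move=> /(IH x Ax).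
  by exists y.
have bad n : A (iter n up x0) /\ ~ P (iter n up x0).
  by elim: n => [|n [An nPn]] //=; have [] := upP _ (conj An nPn).
apply: (wA (fun n => iter n up x0)) => [n|n]; first by case: (bad n).
by have [_ _] := upP _ (bad n).
Qed.

Lemma well_based_nonincreasing_subseq (A : set M) (s : nat -> M) :
  well_based A -> (forall n, A (s n)) ->
  exists phi : nat -> nat, {homo phi : a b / (a < b)%N} /\
    forall a b, (a < b)%N -> mg_le (s (phi b)) (s (phi a)).
Proof.
move=> wA sA.
pose peak n := forall m, (n < m)%N -> ~ mg_lt (s n) (s m).
have [peaks|/existsNP[N no_peak]] :=
  pselect (forall N, exists n, (N < n)%N /\ peak n); last first.
  have /choice[up upP] : forall n, exists m,
      (N < n)%N -> (n < m)%N /\ mg_lt (s n) (s m).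
    move=> n; have [Nn|] := boolP (N < n)%N; last by exists n.
    have /existsNP[m /not_implyP[nm /contrapT]] : ~ peak n
      by move=> pn; apply: no_peak; exists n.
    by exists m.
  have above k : (N < iter k up N.+1)%N.
    by elim: k => //= k IH; apply: ltn_trans IH (upP _ IH).1.
  exfalso; apply: (wA (fun k => s (iter k up N.+1))) => // k.
  exact: (upP _ (above k)).2.
have [next nextP] := choice peaks.
pose phi n := iter n.+1 next 0.
have phi_homo : {homo phi : a b / (a < b)%N}.
  by apply: homo_ltn => [|n]; [exact: ltn_trans|apply: (nextP (phi n)).1].
exists phi; split=> // a b ab; apply: mg_le_of_nlt.
exact: (nextP (iter a next 0)).2 _ (phi_homo _ _ ab).
Qed.

End WellBased.

Section MinimalBadSeq.
Variables (T : Type) (P : T -> Prop) (R : T -> T -> Prop).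

Definition bad_seq (f : nat -> T) :=
  (forall n, P (f n)) /\ (forall a b, (a < b)%N -> R (f a) (f b)).

Lemma minimal_bad_seq (sz : T -> nat) f0 : bad_seq f0 ->
  exists g, bad_seq g /\ forall N h, bad_seq h ->
    (forall i, (i < N)%N -> h i = g i) -> (sz (g N) <= sz (h N))%N.
Proof.
move=> bad_f0.
pose agree n (h p : nat -> T) := forall i, (i < n)%N -> h i = p i.
have /choice[refine refineP] : forall pn : (nat -> T) * nat, exists h,
    bad_seq pn.1 -> [/\ bad_seq h, agree pn.2 h pn.1 &
      forall h', bad_seq h' -> agree pn.2 h' pn.1 ->
        (sz (h pn.2) <= sz (h' pn.2))%N].
  case=> p n /=; have [bad_p|] := pselect (bad_seq p); last by exists p.
  pose szP m := `[< exists h, [/\ bad_seq h, agree n h p & sz (h n) = m] >].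
  have ex_szP : exists m, szP m by exists (sz (p n)); apply/asboolP; exists p.
  case: (ex_minnP ex_szP) => m /asboolP[h [bad_h agree_h <-]] min_m.
  exists h => _; split=> // h' bad_h' agree_h'.
  by apply: min_m; apply/asboolP; exists h'.
pose G := fix G n := if n is n'.+1 then refine (G n', n') else f0.
have G_bad n : bad_seq (G n).
  by elim: n => //= n IH; have [] := refineP (G n, n) IH.
pose g n := G n.+1 n.
have G_g n : agree n (G n) g.
  elim: n => // n IH i; rewrite ltnS leq_eqVlt => /orP[/eqP->//|lt_in].
  have [_ G_next _] := refineP (G n, n) (G_bad n).
  by rewrite [G n.+1 i]G_next //= IH.
exists g; split=> [|N h bad_h agree_h].
  split=> [n|a b ab]; first exact: (G_bad n.+1).1.
  by have := (G_bad b.+1).2 a b ab; rewrite G_g // ltnS ltnW.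
have [_ _ min_G] := refineP (G N, N) (G_bad N).
by apply: min_G => // i iN; rewrite agree_h //= G_g.
Qed.

End MinimalBadSeq.

Lemma infinite_set_inj_seq (T : choiceType) (A : set T) : infinite_set A ->
  exists f : nat -> T, (forall n, A (f n)) /\ injective f.
Proof.
elim/choicePpointed: T => T in A *.
  by rewrite emptyE => /(_ (finite_set0 T)).
move=> /infiniteP/ppcard_leP[f]; exists f; split=> [n|a b fab].
  exact: (@funS _ _ _ _ f n).
by apply: (@inj _ _ _ f) => //; apply: in_setT.
Qed.

Section Words.
Variable M : monomial_group.

Definition words (A : set M) : set (seq M) := [set l | forall x, x \in l -> A x].

Definition prods (A : set M) : set M :=
  [set m | exists l, [/\ l != [::], words A l & mg_prod l = m]].

Definition bad_words (A : set M) :=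
  bad_seq (words A) (fun l l' => l <> l' /\ mg_le (mg_prod l) (mg_prod l')).

Lemma bad_words_nonnil A f : bad_words A f ->
  exists K, forall n, (K <= n)%N -> f n != [::].
Proof.
move=> [_ f_bad]; have [[n0 f_n0]|no_nil] := pselect (exists n0, f n0 = [::]).
  exists n0.+1 => n n0n; apply/eqP => f_n.
  by have [] := f_bad n0 n n0n; rewrite f_n0 f_n.
by exists 0%N => n _; apply/eqP => f_n; apply: no_nil; exists n.
Qed.

Variable S : set M.
Hypotheses (wbS : well_based S) (S_lt1 : forall x, S x -> mg_lt x (mg_one M)).

Lemma bad_words_shorten f : bad_words S f -> exists h N,
  [/\ bad_words S h, forall i, (i < N)%N -> h i = f i &
      (size (h N) < size (f N))%N].
Proof.
move=> bad_f; have [K f_nonnil] := bad_words_nonnil bad_f.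
case: bad_f => f_words f_bad.
pose s n := head (mg_one M) (f (n + K)); pose v n := behead (f (n + K)).
have f_sv n : f (n + K) = s n :: v n.
  by rewrite /s /v; case: (f (n + K)) (f_nonnil (n + K) (leq_addl _ _)).
have S_s n : S (s n) by apply: (f_words (n + K)); rewrite f_sv mem_head.
have [phi [phi_homo s_phi]] := well_based_nonincreasing_subseq wbS S_s.
(* Keep [f] below [N], then continue with the tails of the words
   [f (phi j + K)]: their heads are < 1 and nonincreasing along [phi], so
   dropping them preserves badness. *)
pose N := (phi 0 + K)%N.
pose h n := if (n < N)%N then f n else v (phi (n - N)).
have prod_lt_v j : mg_lt (mg_prod (f (phi j + K))) (mg_prod (v (phi j))).
  by rewrite f_sv; apply/mg_lt1_mul/S_lt1.
have N_le j : (N <= phi j + K)%N.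
  by rewrite leq_add2r; case: j => // j; apply/ltnW/phi_homo.
exists h, N; split=> [||]; last by rewrite /h ltnn subnn /N f_sv.
- split=> [n x|a b ab].
    rewrite /h; case: ifP => _; first exact: f_words.
    by move=> xv; apply: (f_words (phi (n - N) + K)); rewrite f_sv inE xv orbT.
  rewrite /h; case: (ltnP a N) => aN; case: (ltnP b N) => bN.
  + exact: f_bad.
  + have lt_ab := mg_le_lt_trans (f_bad a _ (leq_trans aN (N_le (b - N)))).2
                                 (prod_lt_v (b - N)).
    split=> [eq_ab|]; last by left.
    by rewrite eq_ab in lt_ab; apply: (mg_lt_irr lt_ab).
  + by move: (leq_ltn_trans aN (ltn_trans ab bN)); rewrite ltnn.
  + have jj : (a - N < b - N)%N by rewrite ltn_sub2r // (leq_ltn_trans aN ab).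
    have lt_K : (phi (a - N) + K < phi (b - N) + K)%N.
      by rewrite ltn_add2r phi_homo.
    have [neq_f le_f] := f_bad _ _ lt_K.
    rewrite !f_sv /= in neq_f le_f.
    have s_le := s_phi _ _ jj.
    split; last exact: mg_le_mul_cancel s_le le_f.
    move=> eq_v; apply: neq_f; rewrite eq_v in le_f *; congr (_ :: _).
    exact/mg_le_anti/s_le/(mg_le_mul2r_cancel le_f).
- by move=> i iN; rewrite /h iN.
Qed.

Lemma no_bad_words f : ~ bad_words S f.
Proof.
move=> /(minimal_bad_seq size)[g [bad_g g_min]].
have [h [N [bad_h agree_h size_h]]] := bad_words_shorten bad_g.
by have := g_min N h bad_h agree_h; rewrite leqNgt size_h.
Qed.

Lemma well_based_prods : well_based (prods S).
Proof.
move=> u u_prods u_incr.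
have /choice[w wP] : forall n, exists l, words S l /\ mg_prod l = u n.
  by move=> n; have [l [_ Sl <-]] := u_prods n; exists l.
apply: (@no_bad_words w); split=> [n|a b ab]; first exact: (wP n).1.
have : mg_lt (u a) (u b).
  by apply: (homo_ltn (fun y x z => @mg_lt_trans M x y z) u_incr).
rewrite -(wP a).2 -(wP b).2 => lt_ab; split=> [eq_ab|]; last by left.
by rewrite eq_ab in lt_ab; apply: (mg_lt_irr lt_ab).
Qed.

Lemma finite_words_prod m : finite_set [set l | words S l /\ mg_prod l = m].
Proof.
apply: contrapT => /infinite_set_inj_seq[w [wP w_inj]].
apply: (@no_bad_words w); split=> [n|a b ab]; first exact: (wP n).1.
split=> [/w_inj eq_ab|]; first by rewrite eq_ab ltnn in ab.
by right; rewrite (wP a).2 (wP b).2.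
Qed.

End Words.

Section Prods.
Variables (M : monomial_group) (A : set M).

Lemma prods_sub : A `<=` prods A.
Proof.
by move=> x Ax; exists [:: x]; split=> //= [y /[!inE]/eqP->|]; rewrite ?mg_mulm1.
Qed.

Lemma prods_lt1 : (forall x, A x -> mg_lt x (mg_one M)) ->
  forall x, prods A x -> mg_lt x (mg_one M).
Proof.
by move=> A_lt1 x [l [l_nil Al <-]]; apply: mg_prod_lt1 => // y /Al/A_lt1.
Qed.

Lemma prods_prod l : l != [::] -> (forall y, y \in l -> prods A y) ->
  prods A (mg_prod l).
Proof.
elim: l => // y l IH _ l_prods.
have [w [w_nil Aw <-]] := l_prods y (mem_head _ _); rewrite /=.
have [->|l_nil] := eqVneq l [::]; first by exists w; rewrite mg_mulm1.
have [w' [_ Aw' <-]] : prods A (mg_prod l).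
  by apply: IH => // z zl; apply: l_prods; rewrite inE zl orbT.
exists (w ++ w'); split; first by case: w w_nil {Aw}.
  by move=> x; rewrite mem_cat => /orP[/Aw|/Aw'].
by rewrite mg_prod_cat.
Qed.

End Prods.

Local Open Scope ring_scope.

Lemma summable_prods (k : fieldType) (M : monomial_group) (I : Type)
    (f g : I -> M -> k) :
  summable g -> (forall i x, g i x != 0 -> mg_lt x (mg_one M)) ->
  (forall i, supp (f i) `<=` prods (supp (g i))) -> summable f.
Proof.
move=> [wb_g fin_g] g_lt1 f_prods.
pose U := \bigcup_(i in [set: I]) supp (g i).
have U_lt1 x : U x -> mg_lt x (mg_one M) by case=> i _; apply: g_lt1.
split.
  apply: well_based_sub (well_based_prods wb_g U_lt1) => m [i _ /f_prods].
  by case=> l [l_nil gl <-]; exists l; split=> // x /gl; exists i.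
move=> m; apply: (@sub_finite_set _ _
  (\bigcup_(l in [set l | words U l /\ mg_prod l = m])
     [set i | g i (head (mg_one M) l) != 0])).
  move=> i /f_prods[l [l_nil gl <-]]; exists l.
    by split=> // x /gl; exists i.
  by case: l l_nil gl => // x l _ gl; apply: gl; rewrite mem_head.
by apply: bigcup_finite => [|l _]; [apply: finite_words_prod|apply: fin_g].
Qed.

Section Fsbig.
Variables (R : nmodType) (T : choiceType) (A : set T) (F : T -> R).

Lemma fsbig_neq0 : \sum_(x \in A) F x != 0 -> exists2 x, A x & F x != 0.
Proof.
apply: contraNP => /forall2NP F0; apply/eqP/fsbig1 => x Ax.
by apply/eqP; have [/(_ Ax)|/negP/negPn] := F0 x.
Qed.

Lemma fsbig_single a : A a -> (forall x, A x -> x <> a -> F x = 0) ->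
  \sum_(x \in A) F x = F a.
Proof.
move=> Aa F0; rewrite -(fsbig_widen [set a] A F) ?fsbig_set1 //.
  by move=> x ->.
by move=> x [Ax /F0]; apply.
Qed.

End Fsbig.

Section HahnLog.
Variables (k : fieldType) (M : monomial_group).
Implicit Types (e f g : M -> k) (m : M).

Lemma hmul_neq0 f g m : hmul f g m != 0 ->
  exists x y, [/\ mg_mul x y = m, f x != 0 & g y != 0].
Proof.
move=> /fsbig_neq0[[x y] /= xy]; rewrite mulf_eq0 negb_or => /andP[fx gy].
by exists x, y.
Qed.

Lemma hexp_neq0 e j m : hexp e j m != 0 ->
  exists l, [/\ size l = j, words (supp e) l & mg_prod l = m].
Proof.
elim: j m => [|j IH] m /=.
  by rewrite /hone; case: (m =P mg_one M) => [-> _|_]; [exists [::]|rewrite eqxx].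
move=> /hmul_neq0[x [y [<- ex /IH[l [size_l el <-]]]]].
exists (x :: l); split=> /=; [by rewrite size_l| |by []].
by move=> z /[!inE] /orP[/eqP->|/el].
Qed.

Lemma hexp1 e m : hexp e 1 m = e m.
Proof.
rewrite /= /hmul (@fsbig_single _ _ _ _ (m, mg_one M)) /= ?mg_mulm1 //.
  by rewrite /hone eqxx mulr1.
move=> [x y] /= <- neq; rewrite /hone; case: eqP => [y1|]; last by rewrite mulr0.
by rewrite y1 mg_mulm1 in neq.
Qed.

Lemma hlog1p_supp e : supp (hlog1p e) `<=` prods (supp e).
Proof.
move=> m /fsbig_neq0[[|j] _]; first by rewrite eqxx.
rewrite mulf_eq0 negb_or => /andP[_ /hexp_neq0[l [size_l el <-]]].
by exists l; split=> //; rewrite -size_eq0 size_l.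
Qed.

Lemma hlog1p_eq e m : (forall j, (1 < j)%N -> hexp e j m = 0) ->
  hlog1p e m = e m.
Proof.
move=> hexp0; rewrite /hlog1p /hsum (@fsbig_single _ _ _ _ 1%N) //=.
  by rewrite expr0 mul1r invr1 mul1r; apply: hexp1.
by move=> [|[|j]] // _ _; rewrite hexp0 ?mulr0.
Qed.

Lemma supp_sub_prods_hlog1p e : is_infinitesimal e ->
  supp e `<=` prods (supp (hlog1p e)).
Proof.
move=> [wb_e e_lt1]; apply: (well_based_ind wb_e) => m e_m IH.
have [[j [j1 e_j]]|no_pow] := pselect (exists j, (1 < j)%N /\ hexp e j m != 0).
  have [l [size_l el prod_l]] := hexp_neq0 e_j; rewrite -prod_l.
  apply: prods_prod => [|y yl].
    by rewrite -size_eq0 size_l; case: j j1 {e_j size_l}.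
  apply: IH; first exact: el.
  rewrite -prod_l; apply: mg_prod_lt_mem => [x /el|//|]; first exact: e_lt1.
  by rewrite size_l.
apply: prods_sub; rewrite /supp /= hlog1p_eq // => j j1.
by apply/eqP/negPn/negP => e_j; apply: no_pow; exists j.
Qed.

End HahnLog.

Theorem corollary2p6 (k : fieldType) (M : monomial_group) (I : Type)
  (eps : I -> M -> k) :
  [pchar k] =i pred0 ->
  (forall i, is_infinitesimal (eps i)) ->
  (summable eps <-> summable (fun i => hlog1p (eps i))).
Proof.
move=> _ eps_inf; have eps_lt1 i := (eps_inf i).2.
split=> sum_eps.
  by apply: summable_prods sum_eps eps_lt1 _ => i; apply: hlog1p_supp.
apply: summable_prods sum_eps _ _ => [i x /hlog1p_supp|i].
  exact: prods_lt1 (eps_lt1 i) x.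
exact: supp_sub_prods_hlog1p.
Qed.
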